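(* Let $F$ be a field of characteristic different from $2$, let $a_1,a_2\in F^\times$ be such that $E=F(\sqrt{a_1},\sqrt{a_2})$ is Galois over $F$ with Galois group isomorphic to $\mathbb Z/2\mathbb Z\times\mathbb Z/2\mathbb Z$, and let $E_1=F(\sqrt{a_1})$, $E_2=F(\sqrt{a_2})$, $E_3=F(\sqrt{a_1a_2})$. Then \[N_{E/E_3}(E^\times)\cap F^\times=N_{E_1/F}(E_1^\times)\cdot N_{E_2/F}(E_2^\times).\]
   Context: For a quadratic extension $L/K$ with nontrivial automorphism $\tau$, $N_{L/K}(x)=x\,\tau(x)$ for $x\in L^\times$. For subsets $A,B$ of a multiplicative group, $A\cdot B=\{ab:a\in A,b\in B\}$. *)

From mathcomp Require Import all_boot all_order all_algebra all_fingroup all_solvable all_field.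

From mathcomp Require Import all_boot all_order all_algebra all_fingroup all_solvable all_field.
From mathcomp Require Import ring.
Import GRing.Theory.
Local Open Scope ring_scope.
Set Implicit Arguments.
Unset Strict Implicit.
Unset Printing Implicit Defensive.

(* Let tau be the automorphism of E negating both r1 and r2 (it exists because
   Gal(E/F) has order 4).  It generates Gal(E/E3) and restricts to the
   conjugation of E1 and of E2, so all three norms are x * tau x; hence
   N(y1) N(y2) is the E/E3-norm of y1 y2.  Conversely, write v = p + q r2 with
   p, q in E1.  Since v * tau v lies in F and r2 is not in E1, the
   r2-coefficient q tau(p) - p tau(q) of v * tau v vanishes, so q/p is fixed by
   tau, i.e. lies in F, and v = p (1 + (q/p) r2) (or v = q r2 if p = 0) is a
   product of elements of E1 and E2. *)

Section QuadraticSubfields.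
Variables (F : fieldType) (L : splittingFieldType F).

Lemma aend_fixed1 (f : 'AEnd(L)) : {in 1%VS, f =1 id}.
Proof. exact/fixedSpacesP/sub1v. Qed.

Lemma aend_adjoin_eq (K : {subfield L}) x (f g : 'AEnd(L)) :
  {in K, f =1 g} -> f x = g x -> {in <<K; x>>%VS, f =1 g}.
Proof.
move=> fgK fgx _ /Fadjoin_polyP[p /polyOverP Kp ->].
rewrite -!horner_map /= fgx; congr _.[_]; apply/polyP => i.
by rewrite !coef_map /= fgK.
Qed.

Lemma aend_sqrt_opp (K : {subfield L}) r (f : 'AEnd(L)) :
  {in K, f =1 id} -> r ^+ 2 \in K -> f r != r -> f r = - r.
Proof.
move=> fK Kr2; have : f r ^+ 2 == r ^+ 2 by rewrite -rmorphXn /= fK.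
by rewrite eqf_sqr => /orP[/eqP-> /eqP | /eqP].
Qed.

Lemma aend_sqrt_eq (K : {subfield L}) r (f g : 'AEnd(L)) :
  {in K, f =1 id} -> {in K, g =1 id} -> r ^+ 2 \in K ->
  (f r == r) = (g r == r) -> f r = g r.
Proof.
move=> fK gK Kr2; have [-> | fr] := eqVneq (f r) r; first by move/esym/eqP.
by move=> /esym/negbT gr; rewrite (aend_sqrt_opp fK) // (aend_sqrt_opp gK).
Qed.

Lemma mem_adjoin_sqrt (K : {subfield L}) r v : r ^+ 2 \in K -> v \in <<K; r>>%VS ->
  exists s t, [/\ s \in K, t \in K & v = s + t * r].
Proof.
move=> Kr2 Kv; set c := r ^+ 2 in Kr2.
have deg_r : (adjoin_degree K r <= 2)%N.
  have Kp : ('X^2 - c%:P) \is a polyOver K by rewrite rpredB ?rpredX ?polyOverX ?polyOverC.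
  have root_r : root ('X^2 - c%:P) r by rewrite rootE !hornerE subrr.
  have nz_p : ('X^2 - c%:P : {poly L}) != 0 by rewrite -size_poly_eq0 size_XnsubC.
  have := dvdp_leq nz_p (minPoly_dvdp Kp root_r).
  by rewrite size_minPoly size_XnsubC.
have /polyOverP Kp := Fadjoin_polyOver K r v.
exists (Fadjoin_poly K r v)`_0, (Fadjoin_poly K r v)`_1; split=> //.
rewrite -{1}(Fadjoin_poly_eq Kv) (horner_coef_wide (n := 2)).
  by rewrite !big_ord_recr big_ord0 /= add0r expr0 expr1 mulr1.
exact: leq_trans (size_Fadjoin_poly K r v) deg_r.
Qed.

Lemma adjoin_coord_eq0 (K : {subfield L}) r s t :
  r \notin K -> s \in K -> t \in K -> s + t * r \in K -> t = 0.
Proof.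
move=> rK Ks Kt Kv; apply/eqP; apply: contraNT rK => t_neq0.
by rewrite -[r](mulKf t_neq0) -(addKr s (t * r)) rpredM ?memvV // rpredD ?rpredN.
Qed.

Section OddCharacteristic.
Hypothesis two_neq0 : (2%:R : L) != 0.

Lemma eqr_opp_self (x : L) : (x == - x) = (x == 0).
Proof. by rewrite -addr_eq0 -mulr2n -mulr_natl mulf_eq0 (negPf two_neq0). Qed.

Section Conjugation.
Variables (K : {subfield L}) (r : L) (f : 'AEnd(L)).
Hypotheses (Kr2 : r ^+ 2 \in K) (r_neq0 : r != 0).
Hypotheses (fK : {in K, f =1 id}) (fr : f r = - r).

Local Notation M := <<K; r>>%AS.

Lemma conj_adjoin_sqrt_fixed y : y \in M -> f y = y -> y \in K.
Proof.
move=> /(mem_adjoin_sqrt Kr2)[s [t [Ks Kt ->]]].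
rewrite rmorphD rmorphM /= fr (fK Ks) (fK Kt) => /addrI/eqP.
rewrite mulrN eq_sym eqr_opp_self mulf_eq0 (negPf r_neq0) orbF => /eqP->.
by rewrite mul0r addr0.
Qed.

Lemma conj_adjoin_sqrt_stable : (f @: M <= M)%VS.
Proof.
rewrite aimg_adjoin fixedSpace_limg; last exact/fixedSpacesP.
by apply/FadjoinP; rewrite subv_adjoin fr rpredN memv_adjoin.
Qed.

Lemma gal_conj_adjoin_sqrtE : {in M, gal M f =1 f}.
Proof. exact: galK conj_adjoin_sqrt_stable. Qed.

Lemma gal_adjoin_sqrt : 'Gal(M / K)%g = [set 1; gal M f]%g.
Proof.
have sKM := subv_adjoin K r; apply/setP => h; rewrite !inE.
apply/idP/idP => [galMh | /orP[/eqP-> | /eqP->]]; last 2 first.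
- exact: group1.
- rewrite gal_kHom //; apply/kAHomP => a Ka.
  by rewrite gal_conj_adjoin_sqrtE ?fK // (subvP sKM).
have hK : {in K, h =1 id} by move=> a; apply: fixed_gal.
have [hr | hr] := eqVneq (h r) r.
  by apply/orP; left; apply/gal_eqP/aend_adjoin_eq => [a /hK|]; rewrite gal_id.
apply/orP; right; apply/gal_eqP/aend_adjoin_eq => [a Ka|].
  by rewrite hK // gal_conj_adjoin_sqrtE ?fK // (subvP sKM).
by rewrite gal_conj_adjoin_sqrtE ?memv_adjoin // fr (aend_sqrt_opp hK).
Qed.

Lemma galNorm_adjoin_sqrt y : y \in M -> galNorm K M y = y * f y.
Proof.
move=> My; have gal_neq1 : gal M f != 1%g.
  apply: contra_neq r_neq0 => g1; apply/eqP; rewrite -eqr_opp_self -fr.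
  by rewrite -gal_conj_adjoin_sqrtE ?memv_adjoin // g1 gal_id.
rewrite /galNorm gal_adjoin_sqrt big_setU1 ?inE 1?eq_sym //= big_set1.
by rewrite gal_id gal_conj_adjoin_sqrtE.
Qed.

Lemma mem_galNorm_adjoin_sqrt y : y \in M -> galNorm K M y \in K.
Proof.
move=> My; have /mem_fixedFieldP[MN fixN] := galNorm_fixedField K My.
apply: conj_adjoin_sqrt_fixed => //; rewrite -gal_conj_adjoin_sqrtE //.
by apply: fixN; rewrite gal_adjoin_sqrt !inE eqxx orbT.
Qed.

End Conjugation.

Section Biquadratic.
Variables r1 r2 : L.
Hypotheses (r1_sq : r1 ^+ 2 \in 1%VS) (r2_sq : r2 ^+ 2 \in 1%VS).

Local Notation E := <<<<1; r1>>; r2>>%AS.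
Local Notation E1 := <<1; r1>>%AS.
Local Notation E2 := <<1; r2>>%AS.
Local Notation E3 := <<1; r1 * r2>>%AS.

Lemma gal_biquad_eq (x y : gal_of E) : x r1 = y r1 -> x r2 = y r2 -> x = y.
Proof.
move=> xy1 xy2; apply/eqP/gal_eqP/aend_adjoin_eq => //.
by apply: aend_adjoin_eq => // a a1; rewrite !aend_fixed1.
Qed.

Lemma gal_biquad_signs : #|'Gal(E / 1)%g| = 4%N -> forall b1 b2 : bool,
  exists x : gal_of E, x r1 = (if b1 then r1 else - r1) /\
                       x r2 = (if b2 then r2 else - r2).
Proof.
move=> card_gal b1 b2; pose fixes_r (x : gal_of E) := (x r1 == r1, x r2 == r2).
have fixes_r_inj : injective fixes_r.
  move=> x y [xy1 xy2]; apply: gal_biquad_eq;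
    by apply: (aend_sqrt_eq (@aend_fixed1 x) (@aend_fixed1 y)).
have card_le : (#|{: bool * bool}| <= #|{: gal_of E}|)%N.
  by rewrite card_prod card_bool (_ : 2 * 2 = 4)%N // -card_gal max_card.
have /codomP[x [x1 x2]] := inj_card_onto fixes_r_inj card_le (b1, b2).
have sign r b : r ^+ 2 \in 1%VS -> b = (x r == r) -> x r = if b then r else - r.
  by move=> r_sq ->; have [// | ] := eqVneq; apply: aend_sqrt_opp (@aend_fixed1 x) r_sq.
by exists x; split; apply: sign.
Qed.

Lemma mem_biquad_mul y1 y2 : y1 \in E1 -> y2 \in E2 -> y1 * y2 \in E.
Proof.
move=> E1y1 E2y2; rewrite rpredM //; first exact: subvP_adjoin.
by move: E2y2; apply/subvP/FadjoinP; rewrite sub1v memv_adjoin.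
Qed.

Lemma biquad_sqrt_notin : r2 != 0 -> #|'Gal(E / 1)%g| = 4%N -> r2 \notin E1.
Proof.
move=> r2_neq0 /gal_biquad_signs/(_ true false)[sig [sig_r1 sig_r2]].
have sigE1 : {in E1, sig =1 id}.
  by apply/fixedSpacesP/FadjoinP; split; [exact: sub1v | exact/fixedSpaceP].
apply: contra r2_neq0 => /sigE1 sig_r2_fixed.
by rewrite -eqr_opp_self -sig_r2 sig_r2_fixed.
Qed.

Lemma biquad_adjoin_E3 : r1 != 0 -> E = <<E3; r1>>%AS.
Proof.
move=> r1_neq0; have E3r1r2 : r1 * r2 \in E3 := memv_adjoin _ _.
have Er1 : r1 \in E := subvP_adjoin _ (memv_adjoin _ _).
have Er2 : r2 \in E := memv_adjoin _ _.
apply/val_inj/eqP; rewrite /= eqEsubv; apply/andP; split; apply/FadjoinP; split.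
- by apply/FadjoinP; rewrite sub1v memv_adjoin.
- by rewrite -[r2 in r2 \in _](mulKf r1_neq0) rpredM ?memvV ?memv_adjoin // subvP_adjoin.
- by apply/FadjoinP; split; [exact: sub1v | exact: rpredM].
- exact: Er1.
Qed.

Section NormDecomposition.
Variable tau : 'AEnd(L).
Hypotheses (tau_r1 : tau r1 = - r1) (tau_r2 : tau r2 = - r2).

Lemma biquad_E3_fixed : {in E3, tau =1 id}.
Proof.
apply/fixedSpacesP/FadjoinP; split; first exact: sub1v.
by apply/fixedSpaceP; rewrite rmorphM /= tau_r1 tau_r2 mulrNN.
Qed.

Hypotheses (r1_neq0 : r1 != 0) (r2_neq0 : r2 != 0).

Lemma galNorm_biquad_E3 v : v \in E -> galNorm E3 E v = v * tau v.
Proof.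
have E3r1 : r1 ^+ 2 \in E3 := subvP (sub1v _) _ r1_sq.
rewrite biquad_adjoin_E3 //.
exact: galNorm_adjoin_sqrt E3r1 r1_neq0 biquad_E3_fixed tau_r1 v.
Qed.

Lemma galNorm_biquad_mul y1 y2 : y1 \in E1 -> y2 \in E2 ->
  galNorm E3 E (y1 * y2) = galNorm 1 E1 y1 * galNorm 1 E2 y2.
Proof.
move=> E1y1 E2y2; have fix1 := @aend_fixed1 tau.
rewrite galNorm_biquad_E3 ?mem_biquad_mul //.
rewrite (galNorm_adjoin_sqrt r1_sq r1_neq0 fix1 tau_r1 E1y1).
by rewrite (galNorm_adjoin_sqrt r2_sq r2_neq0 fix1 tau_r2 E2y2) rmorphM; ring.
Qed.

Lemma galNorm_biquad_decomposition v : r2 \notin E1 ->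
  v \in E -> galNorm E3 E v \in 1%VS ->
  exists y1 y2, [/\ y1 \in E1, y2 \in E2 & v = y1 * y2].
Proof.
move=> r2_notin Ev; rewrite galNorm_biquad_E3 // => Nv.
have E1r2 : r2 ^+ 2 \in E1 := subvP (sub1v _) _ r2_sq.
have tauE1 y : y \in E1 -> tau y \in E1.
  by move/(memv_img tau); apply/subvP/conj_adjoin_sqrt_stable => //; apply: aend_fixed1.
have [p [q [E1p E1q def_v]]] := mem_adjoin_sqrt E1r2 Ev.
have coef0 : q * tau p - p * tau q = 0.
  apply: (adjoin_coord_eq0 (s := p * tau p - q * tau q * r2 ^+ 2) r2_notin).
  - by rewrite rpredB ?(rpredM _ E1r2) ?rpredM ?tauE1.
  - by rewrite rpredB ?rpredM ?tauE1.
  - have -> : p * tau p - q * tau q * r2 ^+ 2 + (q * tau p - p * tau q) * r2 = v * tau v.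
      by rewrite def_v rmorphD rmorphM /= tau_r2; ring.
    exact: subvP (sub1v _) _ Nv.
have [p0 | p_neq0] := eqVneq p 0.
  by exists q, r2; rewrite memv_adjoin def_v p0 add0r mulrC.
set w := q / p.
have w1 : w \in 1%VS.
  apply: (conj_adjoin_sqrt_fixed r1_sq r1_neq0 (@aend_fixed1 tau) tau_r1).
    by rewrite rpredM ?memvV.
  rewrite fmorph_div; apply/eqP; rewrite eqr_div ?fmorph_eq0 //; apply/eqP.
  by move/eqP: coef0; rewrite subr_eq0 => /eqP ->; ring.
exists p, (1 + w * r2); split => //.
  by rewrite rpredD ?mem1v // rpredM ?memv_adjoin // (subvP (sub1v _)).
by rewrite def_v /w; field.
Qed.
End NormDecomposition.
End Biquadratic.
End OddCharacteristic.
End QuadraticSubfields.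

Theorem mainTheorem6 (F : fieldType) (L : splittingFieldType F)
  (a1 a2 : F) (r1 r2 : L) :
  (2 \notin [pchar F])%N ->
  a1 != 0 -> a2 != 0 ->
  r1 ^+ 2 = a1%:A -> r2 ^+ 2 = a2%:A ->
  let E  : {subfield L} := <<<<1; r1>>; r2>>%AS in
  let E1 : {subfield L} := <<1; r1>>%AS in
  let E2 : {subfield L} := <<1; r2>>%AS in
  let E3 : {subfield L} := <<1; r1 * r2>>%AS in
  galois 1 E ->
  ('Gal(E / 1%AS) \isog [set: 'Z_2 * 'Z_2])%g ->
  forall z : L,
    [/\ (exists2 x : L, (x \in E) && (x != 0) & galNorm E3 E x = z),
         z \in 1%VS & z != 0] <->
    (exists y1 y2 : L, [/\ y1 \in E1, y1 != 0, y2 \in E2, y2 != 0 &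
                        z = galNorm 1 E1 y1 * galNorm 1 E2 y2]).
Proof.
move=> char2 a1_neq0 a2_neq0 r1_a1 r2_a2 E E1 E2 E3 _ isoG z.
have two_neq0 : (2%:R : L) != 0.
  by apply: contraNneq char2 => two0; rewrite -(pchar_lalg L) inE two0 eqxx.
have sqrt_in1 (r : L) (a : F) : r ^+ 2 = a%:A -> r ^+ 2 \in 1%VS.
  by move=> ->; rewrite rpredZ ?mem1v.
have sqrt_neq0 (r : L) (a : F) : a != 0 -> r ^+ 2 = a%:A -> r != 0.
  by move=> a_neq0 r_a; rewrite -sqrf_eq0 r_a scaler_eq0 oner_eq0 orbF.
have [r1_sq r2_sq] := (sqrt_in1 _ _ r1_a1, sqrt_in1 _ _ r2_a2).
have [r1_neq0 r2_neq0] := (sqrt_neq0 _ _ a1_neq0 r1_a1, sqrt_neq0 _ _ a2_neq0 r2_a2).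
have card_gal : #|'Gal(E / 1%AS)%g| = 4%N.
  by rewrite (card_isog isoG) cardsT card_prod card_ord.
have r2_notin := biquad_sqrt_notin two_neq0 r1_sq r2_sq r2_neq0 card_gal.
have [tau [tau_r1 tau_r2]] := gal_biquad_signs r1_sq r2_sq card_gal false false.
have normM := galNorm_biquad_mul two_neq0 r1_sq r2_sq tau_r1 tau_r2 r1_neq0 r2_neq0.
split=> [[[v /andP[Ev v_neq0] <-] Nv _] | [y1 [y2 [E1y1 y1_neq0 E2y2 y2_neq0 ->]]]].
  have [y1 [y2 [E1y1 E2y2 def_v]]] :=
    galNorm_biquad_decomposition two_neq0 r1_sq r2_sq tau_r1 tau_r2 r1_neq0 r2_notin Ev Nv.
  move: v_neq0; rewrite def_v mulf_eq0 negb_or => /andP[y1_neq0 y2_neq0].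
  by exists y1, y2; rewrite normM.
have fix1 := @aend_fixed1 _ _ tau.
split; last by rewrite mulf_neq0 ?galNorm_eq0.
  by exists (y1 * y2); rewrite ?normM // mulf_neq0 // andbT mem_biquad_mul.
by rewrite rpredM ?(mem_galNorm_adjoin_sqrt two_neq0 r1_sq r1_neq0 fix1 tau_r1)
  ?(mem_galNorm_adjoin_sqrt two_neq0 r2_sq r2_neq0 fix1 tau_r2).
Qed.
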